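(* Let $V$ be a non-empty measurable subset of $\mathbb R^N$ ($N\ge1$), and let $\beta,\zeta\in C^0(\mathbb R)$ be nondecreasing with $\beta(0)=\zeta(0)=0$. Let $(w_m)_{m\in\mathbb N}$ be measurable functions on $V$ and $\overline\beta,\overline\zeta\in L^2(V)$ such that $\beta(w_m)\to\overline\beta$ and $\zeta(w_m)\to\overline\zeta$ weakly in $L^2(V)$, and such that for some $\varphi\in L^\infty(V)$ with $\varphi>0$ a.e. on $V$, $$\lim_{m\to\infty}\int_V\varphi\,\beta(w_m)\,\zeta(w_m)\,dz=\int_V\varphi\,\overline\beta\,\overline\zeta\,dz.$$ Then for any measurable $w$ on $V$ with $(\beta+\zeta)(w)=\overline\beta+\overline\zeta$ a.e. on $V$, one has $\overline\beta=\beta(w)$ and $\overline\zeta=\zeta(w)$ a.e. on $V$. *)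

From HB Require Import structures.
From mathcomp Require Import all_boot all_order all_algebra.
From mathcomp Require Import all_classical all_reals all_analysis.
Set Implicit Arguments. Unset Strict Implicit. Unset Printing Implicit Defensive.
Import Order.TTheory GRing.Theory Num.Theory.
Import numFieldNormedType.Exports.
Local Open Scope classical_set_scope.
Local Open Scope ring_scope.

Definition L2 {d} {T : measurableType d} {R : realType}
  (mu : {measure set T -> \bar R}) (V : set T) (f : T -> R) : Prop :=
  measurable_fun V f /\ (\int[mu]_(x in V) ((f x) ^+ 2)%:E < +oo)%E.

Definition Linfty {d} {T : measurableType d} {R : realType}
  (mu : {measure set T -> \bar R}) (V : set T) (f : T -> R) : Prop :=
  measurable_fun V f /\ exists M : R, {ae mu, forall x, V x -> `|f x| <= M}.

Definition weak_L2_cvg {d} {T : measurableType d} {R : realType}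
  (mu : {measure set T -> \bar R}) (V : set T) (u : nat -> T -> R) (f : T -> R)
  : Prop :=
  (forall m, L2 mu V (u m)) /\ L2 mu V f /\
  forall g, L2 mu V g ->
    (fun m => Rintegral mu V (fun x => u m x * g x)) @ \oo -->
      Rintegral mu V (fun x => f x * g x).

(* Since [beta] and [zeta] are nondecreasing, [(beta s - beta t) * (zeta s - zeta t) >= 0]
   for all [s, t].  Applied to [s = w_m] and [t = w] and weighted by [phi], this gives
   [0 <= int phi (beta(w_m) - beta(w)) (zeta(w_m) - zeta(w))].  Expanding the product,
   every term converges: the product of the two weakly converging factors by hypothesis,
   the cross terms by weak convergence against fixed L^2 functions.  Hence
   [0 <= int phi (betab - beta(w)) (zetab - zeta(w))].  As [betab + zetab = beta(w) + zeta(w)],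
   the second factor is the opposite of the first, so [int phi (betab - beta(w))^2 <= 0],
   and [phi > 0] forces [betab = beta(w)] almost everywhere.  To make all these products
   integrable, [phi] is first replaced by its truncation to [[0, |M|]], which agrees with
   [phi] almost everywhere and is bounded everywhere. *)
From HB Require Import structures.
From mathcomp Require Import all_boot all_order all_algebra.
From mathcomp Require Import all_classical all_reals all_analysis.
From mathcomp Require Import measurable_realfun ring lra.
Import Order.TTheory GRing.Theory Num.Theory.
Import numFieldNormedType.Exports.
Local Open Scope classical_set_scope.
Local Open Scope ring_scope.

Set Implicit Arguments. Unset Strict Implicit.

Lemma nondecreasing_mul_subr_ge0 (R : realDomainType) (f g : R -> R) :
  {homo f : x y / x <= y} -> {homo g : x y / x <= y} ->
  forall s t, 0 <= (f s - f t) * (g s - g t).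
Proof.
move=> hf hg s t; have [st|ts] := leP s t.
  by have := hf _ _ st; have := hg _ _ st; nra.
by have := hf _ _ (ltW ts); have := hg _ _ (ltW ts); nra.
Qed.

Lemma sqr_le_sqrD_of_mul_ge0 (R : realDomainType) (a b c e : R) :
  0 <= a * b -> a + b = c + e -> a ^+ 2 <= 2 * (c ^+ 2 + e ^+ 2).
Proof.
move=> ab0 abce; have : (a + b) ^+ 2 = (c + e) ^+ 2 by rewrite abce.
by have := sqr_ge0 b; have := sqr_ge0 (c - e); nra.
Qed.

Section L2_facts.
Context d (T : measurableType d) (R : realType) (mu : {measure set T -> \bar R}).
Variable V : set T.
Hypothesis mV : measurable V.

Lemma ae_eq_Rintegral (f g : T -> R) :
  measurable_fun V f -> measurable_fun V g ->
  ae_eq mu V f g -> Rintegral mu V f = Rintegral mu V g.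
Proof.
move=> mf mg fg; congr fine; apply: ae_eq_integral => //.
- exact/measurable_EFinP.
- exact/measurable_EFinP.
by apply: filterS fg => x fgx Vx; rewrite /= fgx.
Qed.

Lemma integrable_subr (f g : T -> R) :
  mu.-integrable V (EFin \o f) -> mu.-integrable V (EFin \o g) ->
  mu.-integrable V (EFin \o (fun x => f x - g x)).
Proof.
move=> fi gi; have := integrableB mV fi gi.
by apply: (eq_integrable mV) => x _ /=; rewrite EFinB.
Qed.

Lemma integrable_addr (f g : T -> R) :
  mu.-integrable V (EFin \o f) -> mu.-integrable V (EFin \o g) ->
  mu.-integrable V (EFin \o (fun x => f x + g x)).
Proof.
move=> fi gi; have := integrableD mV fi gi.
by apply: (eq_integrable mV) => x _ /=; rewrite EFinD.
Qed.

Lemma L2_integrable_sqr (f : T -> R) :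
  L2 mu V f -> mu.-integrable V (EFin \o (fun x => f x ^+ 2)).
Proof.
move=> [mf fi]; apply/integrableP; split.
  by apply/measurable_EFinP; exact: measurable_funX.
rewrite (eq_integral (fun x => (f x ^+ 2)%:E)) // => x _.
by rewrite /= ger0_norm // sqr_ge0.
Qed.

Lemma L2_integrable_mul (f g : T -> R) : L2 mu V f -> L2 mu V g ->
  mu.-integrable V (EFin \o (fun x => f x * g x)).
Proof.
move=> Lf Lg.
have := integrable_addr (L2_integrable_sqr Lf) (L2_integrable_sqr Lg).
apply: le_integrable => //.
  by apply/measurable_EFinP; apply: measurable_funM; [exact: Lf.1|exact: Lg.1].
move=> x _ /=; rewrite !lee_fin normrM (ger0_norm (addr_ge0 (sqr_ge0 _) (sqr_ge0 _))).
rewrite -(real_normK (num_real (f x))) -(real_normK (num_real (g x))).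
by have := normr_ge0 (f x); have := normr_ge0 (g x); nra.
Qed.

Lemma L2_dominated (f1 f2 g : T -> R) (c : R) :
  L2 mu V f1 -> L2 mu V f2 -> measurable_fun V g -> 0 <= c ->
  {ae mu, forall x, V x -> g x ^+ 2 <= c * (f1 x ^+ 2 + f2 x ^+ 2)} ->
  L2 mu V g.
Proof.
move=> Lf1 Lf2 mg c0 gc; split => //.
have /integrableP[_ fin12] :=
  integrableZl mV c (integrable_addr (L2_integrable_sqr Lf1) (L2_integrable_sqr Lf2)).
apply: le_lt_trans fin12; apply: ae_ge0_le_integral => //.
- by move=> x _; rewrite lee_fin sqr_ge0.
- by apply/measurable_EFinP; exact: measurable_funX.
- apply: measurableT_comp => //; apply: measurable_funeM; apply/measurable_EFinP.
  by apply: measurable_funD; apply: measurable_funX; [exact: Lf1.1|exact: Lf2.1].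
apply: filterS gc => x gcx Vx.
by rewrite /comp -EFinM /= lee_fin (le_trans (gcx Vx)) // ler_norm.
Qed.

Lemma L2_of_mul_ge0_addr_eq (a b f g : T -> R) :
  L2 mu V f -> L2 mu V g -> measurable_fun V a -> (forall x, 0 <= a x * b x) ->
  {ae mu, forall x, V x -> a x + b x = f x + g x} -> L2 mu V a.
Proof.
move=> Lf Lg ma ab0 abfg; apply: (L2_dominated Lf Lg ma (c := 2)) => //.
by apply: filterS abfg => x abfgx Vx; exact: sqr_le_sqrD_of_mul_ge0 (ab0 x) (abfgx Vx).
Qed.

Lemma L2_mul_bounded (p f : T -> R) (M : R) :
  measurable_fun V p -> (forall x, V x -> `|p x| <= M) ->
  L2 mu V f -> L2 mu V (fun x => p x * f x).
Proof.
move=> mp pM Lf; apply: (L2_dominated Lf Lf (c := M ^+ 2)).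
- by apply: measurable_funM => //; exact: Lf.1.
- exact: sqr_ge0.
apply: aeW => x Vx; rewrite exprMn.
have pM2 : p x ^+ 2 <= M ^+ 2.
  by rewrite -real_normK ?num_real // lerXn2r ?nnegrE ?(le_trans _ (pM x Vx)).
by have := sqr_ge0 (f x); have := sqr_ge0 (p x); nra.
Qed.

Lemma L2_subr (f g : T -> R) :
  L2 mu V f -> L2 mu V g -> L2 mu V (fun x => f x - g x).
Proof.
move=> Lf Lg; apply: (L2_dominated Lf Lg (c := 2)) => //.
  by apply: measurable_funB; [exact: Lf.1|exact: Lg.1].
by apply: aeW => x _; have := sqr_ge0 (f x + g x); nra.
Qed.

Lemma Linfty_pos_truncation (phi : T -> R) :
  Linfty mu V phi -> {ae mu, forall x, V x -> 0 < phi x} ->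
  exists psi : T -> R, exists M : R,
    [/\ measurable_fun V psi, forall x, 0 <= psi x, forall x, `|psi x| <= M,
        ae_eq mu V phi psi & {ae mu, forall x, V x -> 0 < psi x}].
Proof.
move=> [mphi [M phiM]] phi_gt0.
pose psi x := Num.min (Num.max (phi x) 0) `|M|.
have phi_psi : ae_eq mu V phi psi.
  apply: filterS2 phiM phi_gt0 => x phiMx phix Vx.
  rewrite /psi max_l ?ltW ?phix // min_l //.
  by rewrite (le_trans (ler_norm _)) // (le_trans (phiMx Vx)) // ler_norm.
exists psi, `|M|; split.
- by apply: measurable_minr => //; exact: measurable_maxr.
- by move=> x; rewrite /psi le_min le_max lexx orbT normr_ge0.
- move=> x; rewrite /psi ger0_norm ?ge_min ?lexx ?orbT //.
  by rewrite le_min le_max lexx orbT normr_ge0.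
- exact: phi_psi.
by apply: filterS2 phi_psi phi_gt0 => x phipsix phix Vx; rewrite -phipsix ?phix.
Qed.

Lemma Rintegral_weight_ae_eq (phi psi f g : T -> R) :
  measurable_fun V phi -> measurable_fun V psi ->
  measurable_fun V f -> measurable_fun V g -> ae_eq mu V phi psi ->
  Rintegral mu V (fun x => phi x * f x * g x) =
  Rintegral mu V (fun x => psi x * f x * g x).
Proof.
move=> mphi mpsi mf mg phi_psi.
have mpfg (p : T -> R) : measurable_fun V p -> measurable_fun V (fun x => p x * f x * g x).
  by move=> mp; exact: measurable_funM (measurable_funM mp mf) mg.
apply: ae_eq_Rintegral; [exact: mpfg|exact: mpfg|].
by apply: filterS phi_psi => x phipsix Vx; rewrite phipsix.
Qed.

Section bounded_weight.
Variables (psi : T -> R) (M : R).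
Hypotheses (mpsi : measurable_fun V psi) (psiM : forall x, V x -> `|psi x| <= M).

Lemma Rintegral_weight_mul_subr (f g u v : T -> R) :
  L2 mu V f -> L2 mu V g -> L2 mu V u -> L2 mu V v ->
  Rintegral mu V (fun x => psi x * (f x - u x) * (g x - v x)) =
  Rintegral mu V (fun x => psi x * f x * g x)
  - Rintegral mu V (fun x => f x * (psi x * v x))
  - Rintegral mu V (fun x => g x * (psi x * u x))
  + Rintegral mu V (fun x => psi x * u x * v x).
Proof.
move=> Lf Lg Lu Lv.
have ifg := L2_integrable_mul (L2_mul_bounded mpsi psiM Lf) Lg.
have ifv := L2_integrable_mul Lf (L2_mul_bounded mpsi psiM Lv).
have igu := L2_integrable_mul Lg (L2_mul_bounded mpsi psiM Lu).
have iuv := L2_integrable_mul (L2_mul_bounded mpsi psiM Lu) Lv.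
rewrite -RintegralB // -RintegralB ?integrable_subr //.
rewrite -RintegralD ?integrable_subr //.
by apply: eq_Rintegral => x _; ring.
Qed.

Lemma weak_L2_cvg_Rintegral_weight_mul_subr (u v : nat -> T -> R) (f g a b : T -> R) :
  weak_L2_cvg mu V u f -> weak_L2_cvg mu V v g -> L2 mu V a -> L2 mu V b ->
  (fun m => Rintegral mu V (fun x => psi x * u m x * v m x)) @ \oo -->
    Rintegral mu V (fun x => psi x * f x * g x) ->
  (fun m => Rintegral mu V (fun x => psi x * (u m x - a x) * (v m x - b x))) @ \oo -->
    Rintegral mu V (fun x => psi x * (f x - a x) * (g x - b x)).
Proof.
move=> [Lu [Lf uf]] [Lv [Lg vg]] La Lb uvfg.
rewrite (Rintegral_weight_mul_subr Lf Lg La Lb).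
rewrite (funext (fun m => Rintegral_weight_mul_subr (Lu m) (Lv m) La Lb)).
apply: cvgD; last exact: cvg_cst.
apply: cvgB; first apply: cvgB => //.
- exact/uf/(L2_mul_bounded mpsi psiM).
- exact/vg/(L2_mul_bounded mpsi psiM).
Qed.

Lemma Rintegral_ge0_ae_eq0 (h : T -> R) : (forall x, V x -> 0 <= h x) ->
  mu.-integrable V (EFin \o h) -> Rintegral mu V h = 0 ->
  {ae mu, forall x, V x -> h x = 0}.
Proof.
move=> h0 hi hR.
have hE0 : (\int[mu]_(x in V) (h x)%:E = 0)%E.
  by rewrite -(fineK (integrable_fin_num mV hi)) /Rintegral in hR *; rewrite hR.
have := (ae_eq_integral_abs mu mV (measurable_int _ hi)).1.
rewrite (eq_integral (fun x => (h x)%:E)); last first.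
  by move=> x /[!inE] Vx /=; rewrite ger0_norm ?h0.
by move=> /(_ hE0); apply: filterS => x hx Vx; case: (hx Vx).
Qed.

Lemma ae_eq0_of_Rintegral_weight_mul_ge0 (h k : T -> R) :
  (forall x, 0 <= psi x) -> {ae mu, forall x, V x -> 0 < psi x} ->
  L2 mu V h -> L2 mu V k -> {ae mu, forall x, V x -> h x + k x = 0} ->
  0 <= Rintegral mu V (fun x => psi x * h x * k x) ->
  {ae mu, forall x, V x -> h x = 0}.
Proof.
move=> psi0 psi_gt0 Lh Lk hk0 hk_ge0.
have psihh0 x : 0 <= psi x * h x * h x by rewrite -mulrA -expr2 mulr_ge0 ?sqr_ge0.
have ihh := L2_integrable_mul (L2_mul_bounded mpsi psiM Lh) Lh.
have ihk := L2_integrable_mul (L2_mul_bounded mpsi psiM Lh) Lk.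
have hh_hk0 : Rintegral mu V (fun x => psi x * h x * h x)
    + Rintegral mu V (fun x => psi x * h x * k x) = 0.
  rewrite -RintegralD // -(mul0r (fine (mu V))) -Rintegral_cst //.
  apply: ae_eq_Rintegral; first exact/measurable_EFinP/measurable_int/integrable_addr.
    exact: measurable_cst.
  by apply: filterS hk0 => x hkx Vx; rewrite -mulrDr hkx ?mulr0.
have hh0 : Rintegral mu V (fun x => psi x * h x * h x) = 0.
  by have := @Rintegral_ge0 _ _ _ mu V _ (fun x _ => psihh0 x); lra.
apply: filterS2 (Rintegral_ge0_ae_eq0 (fun x _ => psihh0 x) ihh hh0) psi_gt0.
move=> x hhx psix Vx; apply/eqP.
by move: (hhx Vx) => /eqP; rewrite -mulrA mulf_eq0 (gt_eqF (psix Vx)) mulf_eq0 orbb.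
Qed.

End bounded_weight.
End L2_facts.

Theorem lemma5p5 (d : measure_display) (T : measurableType d) (R : realType)
  (mu : {measure set T -> \bar R}) (V : set T)
  (beta zeta : R -> R) (w_ : nat -> T -> R) (betab zetab phi w : T -> R) :
  measurable V -> V !=set0 ->
  continuous beta -> continuous zeta ->
  {homo beta : x y / x <= y} -> {homo zeta : x y / x <= y} ->
  beta 0 = 0 -> zeta 0 = 0 ->
  (forall m, measurable_fun V (w_ m)) ->
  L2 mu V betab -> L2 mu V zetab ->
  weak_L2_cvg mu V (fun m x => beta (w_ m x)) betab ->
  weak_L2_cvg mu V (fun m x => zeta (w_ m x)) zetab ->
  Linfty mu V phi -> {ae mu, forall x, V x -> 0 < phi x} ->
  (fun m => Rintegral mu V (fun z => phi z * beta (w_ m z) * zeta (w_ m z)))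
    @ \oo --> Rintegral mu V (fun z => phi z * betab z * zetab z) ->
  measurable_fun V w ->
  {ae mu, forall x, V x -> beta (w x) + zeta (w x) = betab x + zetab x} ->
  {ae mu, forall x, V x -> betab x = beta (w x)} /\
  {ae mu, forall x, V x -> zetab x = zeta (w x)}.
Proof.
move=> mV _ cbeta czeta hbeta hzeta beta0 zeta0 _ Lbetab Lzetab wbeta wzeta
  Lphi phi_gt0 cvg_prod mw sum_w.
have mono := nondecreasing_mul_subr_ge0 hbeta hzeta.
have prod_ge0 t : 0 <= beta t * zeta t by have := mono t 0; rewrite beta0 zeta0 !subr0.
have Lbetaw : L2 mu V (beta \o w).
  apply: (L2_of_mul_ge0_addr_eq mV Lbetab Lzetab _ (fun x => prod_ge0 (w x)) sum_w).
  exact: measurableT_comp (continuous_measurable_fun cbeta) mw.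
have Lzetaw : L2 mu V (zeta \o w).
  apply: (L2_of_mul_ge0_addr_eq (b := beta \o w) mV Lbetab Lzetab).
  - exact: measurableT_comp (continuous_measurable_fun czeta) mw.
  - by move=> x; rewrite mulrC; exact: prod_ge0.
  - by apply: filterS sum_w => x sx Vx; rewrite addrC sx.
have [psi [M [mpsi psi0 psiM phi_psi psi_gt0]]] :=
  Linfty_pos_truncation Lphi phi_gt0.
have psiMV x (_ : V x) := psiM x.
have cvg_prod_psi :
    (fun m => Rintegral mu V (fun z => psi z * beta (w_ m z) * zeta (w_ m z)))
    @ \oo --> Rintegral mu V (fun z => psi z * betab z * zetab z).
  have phi_psi_m m :
      Rintegral mu V (fun z => phi z * beta (w_ m z) * zeta (w_ m z)) =
      Rintegral mu V (fun z => psi z * beta (w_ m z) * zeta (w_ m z)).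
    by have := Rintegral_weight_ae_eq mV Lphi.1 mpsi (wbeta.1 m).1 (wzeta.1 m).1 phi_psi.
  rewrite -(funext phi_psi_m).
  by rewrite -(Rintegral_weight_ae_eq mV Lphi.1 mpsi Lbetab.1 Lzetab.1 phi_psi).
have lim_ge0 : 0 <= Rintegral mu V
    (fun x => psi x * (betab x - beta (w x)) * (zetab x - zeta (w x))).
  have := weak_L2_cvg_Rintegral_weight_mul_subr
    mV mpsi psiMV wbeta wzeta Lbetaw Lzetaw cvg_prod_psi.
  move=> /cvgr_to_ge; apply; apply: nearW => m.
  by apply: Rintegral_ge0 => x _; rewrite -mulrA mulr_ge0 ?psi0 ?mono.
have betab_w : {ae mu, forall x, V x -> betab x = beta (w x)}.
  have opp : {ae mu, forall x, V x ->
      (betab x - beta (w x)) + (zetab x - zeta (w x)) = 0}.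
    by apply: filterS sum_w => x sx Vx; rewrite addrACA -opprD sx ?subrr.
  apply: filterS (ae_eq0_of_Rintegral_weight_mul_ge0 mV mpsi psiMV psi0 psi_gt0
    (L2_subr mV Lbetab Lbetaw) (L2_subr mV Lzetab Lzetaw) opp lim_ge0).
  by move=> x hx Vx; apply/eqP; rewrite -subr_eq0 hx.
split => //; apply: filterS2 betab_w sum_w => x bx sx Vx.
by have := bx Vx; have := sx Vx; lra.
Qed.
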